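(* Let $\mathbf i'=\eta_k\mathbf i$ be a 4-move, $i=i_k$, $j=i_{k+1}$. For $\mathbf g'=(g'_u)\in\mathbb Z^{\oplus\mathbb N}$ define $\mathbf g=(g_u)\in\mathbb Z^{\oplus\mathbb N}$ by: $A=g'_k+\mathsf c_{j,i}[-g'_{k+1}]_+$, $B=-g'_{k+1}+\mathsf c_{i,j}[-A]_+$, and $g_{k+3}=g'_{k+2}-\mathsf c_{j,i}[g'_{k+1}]_++[A]_+$, $g_{k+2}=g'_{k+3}-[-g'_{k+1}]_++[B]_+$, $g_{k+1}=-A+\mathsf c_{j,i}[-B]_+$, $g_k=-B$, $g_{k^-_{\mathbf i}}=g'_{(k+1)^-_{\mathbf i'}}+[g'_{k+1}]_+-[-B]_+$ (if $k^-_{\mathbf i}>0$), $g_{(k+1)^-_{\mathbf i}}=g'_{k^-_{\mathbf i'}}+[A]_+-\mathsf c_{j,i}[B]_+$ (if $(k+1)^-_{\mathbf i}>0$), and $g_u=g'_u$ for all other $u$. Then the map $\mathbf g'\mapsto\mathbf g$ sends the cone $C_{\mathbf i'}$ into the cone $C_{\mathbf i}$.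
   Context: $\mathfrak g$ is a complex finite-dimensional simple Lie algebra with index set $I$ and Cartan matrix $\mathsf C=(\mathsf c_{i,j})$. $\mathbb N=\{1,2,\dots\}$, $[a]_+=\max(a,0)$. $I^{(\infty)}$ is the set of sequences $\mathbf i=(i_u)_{u\in\mathbb N}\in I^{\mathbb N}$ in which each element of $I$ occurs infinitely often; $u^-_{\mathbf i}=\max(\{v<u:i_v=i_u\}\cup\{0\})$. A 4-move $\mathbf i'=\eta_k\mathbf i$ means $i_k=i_{k+2}=i'_{k+1}=i'_{k+3}$, $i_{k+1}=i_{k+3}=i'_k=i'_{k+2}$, $i_u=i'_u$ for $u\notin[k,k+3]$, and $\mathsf c_{i_{k+1},i_k}\mathsf c_{i_k,i_{k+1}}=2$ (so $(k+1)^-_{\mathbf i'}=k^-_{\mathbf i}$, $k^-_{\mathbf i'}=(k+1)^-_{\mathbf i}$). For $\mathbf i\in I^{\mathbb N}$, the cone $C_{\mathbf i}=\{\mathbf g=(g_u)\in\mathbb Z^{\oplus\mathbb N}:\sum_{v\ge u,\,i_v=i_u}g_v\ge0\ \text{for all }u\in\mathbb N\}$ ($\mathbb Z^{\oplus\mathbb N}$ = finitely supported integer sequences). *)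

From mathcomp Require Import all_boot all_order all_algebra.
Set Implicit Arguments. Unset Strict Implicit. Unset Printing Implicit Defensive.
Import Order.TTheory GRing.Theory Num.Theory.
Local Open Scope ring_scope.

Definition pos_part (a : int) : int := Num.max a 0.

(* Cartan matrix of a complex finite-dimensional simple Lie algebra, i.e.
   an indecomposable generalized Cartan matrix of finite type
   (symmetrizable with positive definite symmetrization). *)
Definition finite_type_cartan (I : finType) (C : I -> I -> int) : Prop :=
  [/\ (0 < #|I|)%N /\ (forall a, C a a = 2),
      (forall a b, a != b -> C a b <= 0),
      (forall a b, C a b = 0 <-> C b a = 0),
      (forall S : {set I}, S != set0 -> S != setT ->
         exists a, exists b, [/\ a \in S, b \notin S & C a b != 0]) &
      exists d : I -> int,
        [/\ (forall a, 0 < d a),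
            (forall a b, d a * C a b = d b * C b a) &
            (forall x : I -> rat, (exists a, x a != 0) ->
               0 < \sum_a \sum_b x a * ((d a * C a b)%:~R) * x b)]].

(* Sequences i = (i_u)_{u in N}, N = {1,2,...}; position 0 is unused. *)
Definition inf_often (I : finType) (s : nat -> I) : Prop :=
  forall a n, exists v, (n < v)%N /\ s v = a.

Definition uminus (I : finType) (s : nat -> I) (u : nat) : nat :=
  \max_(1 <= v < u | s v == s u) v.

Definition four_move (I : finType) (C : I -> I -> int) (k : nat)
  (s s' : nat -> I) : Prop :=
  [/\ (0 < k)%N,
      s k = s k.+2 /\ s k.+2 = s' k.+1 /\ s' k.+1 = s' k.+3,
      s k.+1 = s k.+3 /\ s k.+3 = s' k /\ s' k = s' k.+2,
      (forall u, (0 < u)%N -> (u < k)%N || (k.+3 < u)%N -> s u = s' u) &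
      C (s k.+1) (s k) * C (s k) (s k.+1) = 2].

Definition fin_supp (g : nat -> int) : Prop :=
  exists N, forall v, (N <= v)%N -> g v = 0.

Definition in_cone (I : finType) (s : nat -> I) (g : nat -> int) : Prop :=
  fin_supp g /\
  forall u, (0 < u)%N -> forall N, (forall v, (N <= v)%N -> g v = 0) ->
    0 <= \sum_(u <= v < N | s v == s u) g v.

Definition move_map (I : finType) (C : I -> I -> int) (k : nat)
  (s s' : nat -> I) (g' : nat -> int) : nat -> int :=
  let i := s k in let j := s k.+1 in
  let A := g' k + C j i * pos_part (- g' k.+1) in
  let B := - g' k.+1 + C i j * pos_part (- A) in
  let km := uminus s k in let k1m := uminus s k.+1 in
  fun u =>
    if u == k.+3 then g' k.+2 - C j i * pos_part (g' k.+1) + pos_part A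
    else if u == k.+2 then g' k.+3 - pos_part (- g' k.+1) + pos_part B
    else if u == k.+1 then - A + C j i * pos_part (- B)
    else if u == k then - B
    else if (0 < km)%N && (u == km) then
      g' (uminus s' k.+1) + pos_part (g' k.+1) - pos_part (- B)
    else if (0 < k1m)%N && (u == k1m) then
      g' (uminus s' k) + pos_part A - C j i * pos_part B
    else g' u.

(* The sequences i and i' agree outside the block k..k+3, and g differs from
   g' only on that block and at the previous occurrences k^- and (k+1)^- of the
   two letters i = i_k and j = i_(k+1).  Hence the suffix sums of g starting
   after the block are those of g', and so are the suffix sums starting before
   the block: for letters other than i, j nothing changes, while for i and j
   the corrections at k^- and (k+1)^- exactly compensate the change of the
   block (two piecewise-linear identities, the second one using
   c_ij c_ji = 2).  The four suffix sums starting inside the block are bounded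
   below by piecewise-linear inequalities in g'_k, ..., g'_(k+3) and the tails,
   which hold because {c_ij, c_ji} = {-1, -2}. *)

From mathcomp Require Import all_boot all_order all_algebra.
From mathcomp Require Import zify ring.
Set Implicit Arguments. Unset Strict Implicit. Unset Printing Implicit Defensive.
Import Order.TTheory GRing.Theory Num.Theory.
Local Open Scope ring_scope.

Lemma pos_part_spec (x : int) :
  0 <= pos_part x /\ x <= pos_part x /\ (pos_part x = x \/ pos_part x = 0).
Proof. by rewrite /pos_part; case: (leP x 0) => h; lia. Qed.

Lemma pos_part_subN (x : int) : pos_part x - pos_part (- x) = x.
Proof. by have := pos_part_spec x; have := pos_part_spec (- x); lia. Qed.

Lemma nonpos_factors_2 (p q : int) :
  p <= 0 -> q <= 0 -> p * q = 2 -> (p = -1 /\ q = -2) \/ (p = -2 /\ q = -1).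
Proof.
move=> hp hq hpq.
have : p = -1 \/ p = -2 \/ p <= -3 \/ p = 0 by lia.
case=> [ep|[ep|[ep|ep]]]; rewrite ?ep in hpq; try lia.
have [eq|hq1] : q = 0 \/ q <= -1 by lia.
  by rewrite eq mulr0 in hpq.
nia.
Qed.

Section MoveInequalities.

(* [a, b, c, d] stand for g'_k, ..., g'_(k+3) and [p, q] for c_ji, c_ij.  In
   the inequalities the tails of the suffix sums beyond k+3 are absorbed into
   [c] and [d], which enter only additively. *)
Variables p q a b : int.
Local Notation A := (a + p * pos_part (- b)).
Local Notation B := (- b + q * pos_part (- A)).

Lemma move_conserve_i (d : int) :
  (pos_part b - pos_part (- B)) + - B + (d - pos_part (- b) + pos_part B) = b + d.
Proof. by have := pos_part_subN b; have := pos_part_subN B; lia. Qed.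

Lemma move_k2_ge0 (d : int) :
  0 <= d -> 0 <= b + d -> 0 <= d - pos_part (- b) + pos_part B.
Proof. by have := pos_part_spec (- b); have := pos_part_spec B; lia. Qed.

Lemma move_k_ge0 (d : int) :
  0 <= d -> 0 <= b + d -> 0 <= - B + (d - pos_part (- b) + pos_part B).
Proof.
by have := pos_part_spec (- b); have := pos_part_subN B; have := pos_part_spec (- B); lia.
Qed.

Hypothesis hp : p <= 0.

Lemma move_k3_ge0 (c : int) : 0 <= c -> 0 <= c - p * pos_part b + pos_part A.
Proof.
have [b_ge0 _] := pos_part_spec b; have [A_ge0 _] := pos_part_spec A.
by have := mulr_le0_ge0 hp b_ge0; lia.
Qed.

Hypothesis hpq : p * q = 2.

Lemma move_conserve_j (c : int) :
  (pos_part A - p * pos_part B) + (- A + p * pos_part (- B))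
    + (c - p * pos_part b + pos_part A) = a + c.
Proof.
have eA := pos_part_subN A; have eB := pos_part_subN B; have eb := pos_part_subN b.
apply/eqP; rewrite -subr_eq0; apply/eqP.
(* The difference is a combination of the vanishing [x]_+ - [-x]_+ - x and of 2 - p q. *)
have -> : pos_part A - p * pos_part B + (- A + p * pos_part (- B))
    + (c - p * pos_part b + pos_part A) - (a + c)
  = 2 * (pos_part A - pos_part (- A) - A) - p * (pos_part B - pos_part (- B) - B)
    - p * (pos_part b - pos_part (- b) - b) + (2 - p * q) * pos_part (- A).
  by ring.
by rewrite eA eB eb hpq; ring.
Qed.

Hypothesis hq : q <= 0.

Lemma move_k1_ge0 (c : int) :
  0 <= c -> 0 <= a + c ->
  0 <= (- A + p * pos_part (- B)) + (c - p * pos_part b + pos_part A).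
Proof.
move=> hc hac.
have := pos_part_spec b; have := pos_part_spec (- b); have := pos_part_spec A.
have := pos_part_spec (- A); have := pos_part_spec B; have := pos_part_spec (- B).
by case: (nonpos_factors_2 hp hq hpq) => -[-> ->]; lia.
Qed.

End MoveInequalities.

Section LabelSums.

Variables (I : finType) (t : nat -> I).

Definition label_sum (F : nat -> int) (l : I) (m n : nat) : int :=
  \sum_(m <= v < n | t v == l) F v.

Lemma label_sum_ltn F l m n : (m < n)%N ->
  label_sum F l m n = (if t m == l then F m else 0) + label_sum F l m.+1 n.
Proof. by move=> lt_mn; rewrite /label_sum big_ltn_cond //; case: ifP; rewrite ?add0r. Qed.

Lemma label_sum_cat F l m n p : (m <= n <= p)%N ->
  label_sum F l m p = label_sum F l m n + label_sum F l n p.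
Proof. by case/andP=> le_mn le_np; rewrite /label_sum (big_cat_nat le_mn le_np). Qed.

Lemma label_sumD F G l m n :
  label_sum (fun v => F v + G v) l m n = label_sum F l m n + label_sum G l m n.
Proof. exact: big_split. Qed.

Lemma label_sum_indicator (c : int) l m n x :
  label_sum (fun v => if v == x then c else 0) l m n =
  if (m <= x < n)%N && (t x == l) then c else 0.
Proof.
rewrite /label_sum; case: ifP => [/andP[x_mn tx] | x_out].
  rewrite big_mkcond (bigD1_seq x) ?mem_index_iota ?iota_uniq //= tx eqxx.
  by rewrite big1 ?addr0 // => v /negbTE ->; case: ifP.
rewrite big_nat_cond big1 // => v /andP[v_mn tv].
by case: eqP => // ev; rewrite -ev v_mn tv in x_out.
Qed.

Lemma label_sum_zero_tail F l m N M :
  (forall v, (N <= v)%N -> F v = 0) -> (N <= M)%N ->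
  label_sum F l m N = label_sum F l m M.
Proof.
move=> F0 le_NM; have tail0 : label_sum F l N M = 0.
  by rewrite /label_sum big_nat_cond big1 // => v /andP[/andP[/F0]].
case: (leqP N m) => [le_Nm | lt_mN].
  rewrite /label_sum big_geq // big_nat_cond big1 // => v /andP[/andP[le_mv _] _].
  exact/F0/(leq_trans le_Nm).
by rewrite (@label_sum_cat F l m N M) ?tail0 ?addr0 // (ltnW lt_mN).
Qed.

End LabelSums.

Lemma eq_label_sum (I : finType) (t t' : nat -> I) (F F' : nat -> int) l m n :
  (forall v, (m <= v < n)%N -> t v = t' v /\ F v = F' v) ->
  label_sum t F l m n = label_sum t' F' l m n.
Proof.
move=> tF; rewrite /label_sum big_nat_cond [RHS]big_nat_cond.
apply: eq_big => [v | v /andP[/tF[_ ->] _]] //.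
by case v_in: (m <= v < n)%N => //=; have [-> _] := tF v v_in.
Qed.

Lemma in_cone_label_sum (I : finType) (t : nat -> I) (F : nat -> int) M :
  (forall v, (M <= v)%N -> F v = 0) ->
  (forall u, (0 < u)%N -> 0 <= label_sum t F (t u) u M) -> in_cone t F.
Proof.
move=> F0 ge0; split; first by exists M.
move=> u u_gt0 N FN0; rewrite -/(label_sum t F (t u) u N).
rewrite (label_sum_zero_tail _ _ _ FN0 (leq_maxl N M)).
by rewrite -(label_sum_zero_tail _ _ _ F0 (leq_maxr N M)) ge0.
Qed.

Section PreviousOccurrence.

Variables (I : finType) (s : nat -> I).

Lemma uminus_cases x : uminus s x = 0%N \/
  [/\ (0 < uminus s x)%N, (uminus s x < x)%N & s (uminus s x) = s x].
Proof.
rewrite /uminus big_seq_cond.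
apply: (big_ind (fun m => m = 0%N \/ [/\ (0 < m)%N, (m < x)%N & s m = s x])).
- by left.
- by move=> m1 m2 h1 h2; case: (leqP m1 m2).
- by move=> v /andP[v_in /eqP sv]; rewrite mem_index_iota in v_in; right; split => //; lia.
Qed.

Lemma leq_uminus x v : (0 < v < x)%N -> s v = s x -> (v <= uminus s x)%N.
Proof.
move=> v_in sv; apply: (leq_bigmax_seq (F := id)); last exact/eqP.
by rewrite mem_index_iota.
Qed.

Lemma uminusS_skip x : (0 < x)%N -> s x != s x.+1 ->
  uminus s x.+1 = \max_(1 <= v < x | s v == s x.+1) v.
Proof.
move=> x_gt0 sx; rewrite /uminus big_mkcond big_nat_recr //= (negbTE sx) maxn0.
by rewrite -big_mkcond.
Qed.

Lemma uminus_window x u : (0 < u < x)%N ->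
  ((u <= uminus s x)%N && (s (uminus s x) == s u)) = (s x == s u).
Proof.
move=> u_in; case: (eqVneq (s x) (s u)) => [sxu | sxu].
  have u_le := leq_uminus u_in (esym sxu).
  by case: (uminus_cases x) => [e | [_ _ ->]]; [lia | rewrite u_le sxu eqxx].
case: (uminus_cases x) => [-> | [_ _ ->]]; last by rewrite (negbTE sxu) andbF.
by have -> : (u <= 0)%N = false by lia.
Qed.

End PreviousOccurrence.

Section FourMove.

Variables (I : finType) (C : I -> I -> int) (k : nat) (s s' : nat -> I).
Hypothesis hmove : four_move C k s s'.
Hypothesis C_diag : forall a, C a a = 2.
Hypothesis C_offdiag : forall a b, a != b -> C a b <= 0.

Local Notation i := (s k).
Local Notation j := (s k.+1).
Local Notation km := (uminus s k).
Local Notation k1m := (uminus s k.+1).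

Lemma four_move_gt0 : (0 < k)%N.
Proof. by case: hmove. Qed.

Lemma four_move_labels : s k.+2 = i /\ s k.+3 = j.
Proof. by case: hmove => _ [e1 _] [e2 _] _ _. Qed.

Lemma four_move_labels' : [/\ s' k = j, s' k.+1 = i, s' k.+2 = j & s' k.+3 = i].
Proof. by case: hmove => _ [e1 [e2 e3]] [e4 [e5 e6]] _ _; split; congruence. Qed.

Lemma four_move_eq_out u : (0 < u)%N -> (u < k)%N || (k.+3 < u)%N -> s' u = s u.
Proof. by case: hmove => _ _ _ out _ u_gt0 /(out u u_gt0). Qed.

Lemma four_move_cartan : C j i * C i j = 2.
Proof. by case: hmove. Qed.

Lemma four_move_neq : i != j.
Proof.
by apply/eqP => eij; have := four_move_cartan; rewrite -eij C_diag.
Qed.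

Lemma four_move_cartan_le0 : C j i <= 0 /\ C i j <= 0.
Proof. by split; apply: C_offdiag; rewrite ?four_move_neq // eq_sym four_move_neq. Qed.

Lemma four_move_uminus : uminus s' k.+1 = km /\ uminus s' k = k1m.
Proof.
have [s'k s'k1 _ _] := four_move_labels'; have k_gt0 := four_move_gt0.
have same_before a : \max_(1 <= v < k | s' v == a) v = \max_(1 <= v < k | s v == a) v.
  rewrite big_nat_cond [RHS]big_nat_cond; apply: eq_bigl => v.
  by case v_in: (1 <= v < k)%N; rewrite //= four_move_eq_out //; lia.
split.
  rewrite (uminusS_skip (s := s') k_gt0) ?s'k1 ?same_before //.
  by rewrite s'k eq_sym four_move_neq.
by rewrite (uminusS_skip (s := s) k_gt0) ?four_move_neq // -same_before -s'k.
Qed.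

Lemma uminus_move_cases :
  (km = 0%N \/ [/\ (0 < km)%N, (km < k)%N & s km = i]) /\
  (k1m = 0%N \/ [/\ (0 < k1m)%N, (k1m < k)%N & s k1m = j]).
Proof.
split; first exact: uminus_cases.
case: (uminus_cases s k.+1) => [|[k1m_gt0 k1m_lt sk1m]]; [by left | right; split=> //].
have : k1m != k by apply: contra_neq four_move_neq => ek; rewrite -sk1m ek.
by lia.
Qed.

Lemma uminus_move_lt : (km < k)%N /\ (k1m < k)%N.
Proof.
have k_gt0 := four_move_gt0.
by case: uminus_move_cases => [[->|[_ ? _]] [->|[_ ? _]]].
Qed.

Variable g' : nat -> int.

Local Notation A := (g' k + C j i * pos_part (- g' k.+1)).
Local Notation B := (- g' k.+1 + C i j * pos_part (- A)).
Local Notation g := (move_map C k s s' g').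

Lemma move_map_above v : (k.+3 < v)%N -> g v = g' v.
Proof.
move=> v_gt; have [km_lt k1m_lt] := uminus_move_lt.
rewrite /move_map /=.
do 4 (case: eqP => [?|_]; first lia).
by do 2 (case: ifP => [/andP[_ /eqP ?]|_]; first lia).
Qed.

Lemma move_map_block :
  [/\ g k = - B, g k.+1 = - A + C j i * pos_part (- B),
      g k.+2 = g' k.+3 - pos_part (- g' k.+1) + pos_part B &
      g k.+3 = g' k.+2 - C j i * pos_part (g' k.+1) + pos_part A].
Proof.
rewrite /move_map /= !eqxx.
by split; do ?(case: eqP => [?|_]; first lia).
Qed.

Lemma move_map_below v : (0 < v < k)%N ->
  g v = g' v + (if v == km then pos_part (g' k.+1) - pos_part (- B) else 0)
             + (if v == k1m then pos_part A - C j i * pos_part B else 0).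
Proof.
move=> v_in; have [km_cases k1m_cases] := uminus_move_cases.
have km_k1m : (0 < km)%N -> km != k1m.
  move=> km_gt0; case: km_cases => [e|[_ _ skm]]; first by rewrite e in km_gt0.
  case: k1m_cases => [->|[_ _ sk1m]]; first by rewrite -lt0n.
  by apply: contra_neq four_move_neq => e; rewrite -skm -sk1m e.
rewrite /move_map /=; have [-> ->] := four_move_uminus.
do 4 (case: eqP => [?|_]; first lia).
case: (eqVneq v km) => [ekm|v_km].
  have km_gt0 : (0 < km)%N by lia.
  by rewrite ekm km_gt0 (negbTE (km_k1m km_gt0)) addr0 addrA.
case: (eqVneq v k1m) => [ek1m|v_k1m]; last by rewrite !andbF !addr0.
have k1m_gt0 : (0 < k1m)%N by lia.
by rewrite andbF ek1m k1m_gt0 addr0 addrA.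
Qed.

Variable M : nat.
Hypothesis k4_le_M : (k.+4 <= M)%N.

Lemma label_sum_block (t : nat -> I) (F : nat -> int) l :
  [/\ label_sum t F l k M = (if t k == l then F k else 0) + label_sum t F l k.+1 M,
      label_sum t F l k.+1 M = (if t k.+1 == l then F k.+1 else 0) + label_sum t F l k.+2 M,
      label_sum t F l k.+2 M = (if t k.+2 == l then F k.+2 else 0) + label_sum t F l k.+3 M &
      label_sum t F l k.+3 M = (if t k.+3 == l then F k.+3 else 0) + label_sum t F l k.+4 M].
Proof. by split; apply: label_sum_ltn; lia. Qed.

Lemma label_sum_move_above l m : (k.+4 <= m)%N ->
  label_sum s g l m M = label_sum s' g' l m M.
Proof.
move=> m_ge; apply: eq_label_sum => v v_in.
by rewrite move_map_above ?four_move_eq_out //; lia.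
Qed.

Hypothesis cone' : forall u, (0 < u)%N -> 0 <= label_sum s' g' (s' u) u M.

Lemma move_cone_above u : (k.+4 <= u)%N -> 0 <= label_sum s g (s u) u M.
Proof.
move=> u_ge; rewrite label_sum_move_above // -four_move_eq_out; try lia.
by apply: cone'; lia.
Qed.

Lemma move_cone_block u : (k <= u <= k.+3)%N -> 0 <= label_sum s g (s u) u M.
Proof.
move=> u_in; have [sk2 sk3] := four_move_labels.
have [s'k s'k1 s'k2 s'k3] := four_move_labels'.
have ij := negbTE four_move_neq; have ji : (j == i) = false by rewrite eq_sym.
have [[p_le0 q_le0] pq] := (four_move_cartan_le0, four_move_cartan).
have [gk gk1 gk2 gk3] := move_map_block.
have [ei0 ei1 ei2 ei3] := label_sum_block s' g' i.
have [ej0 ej1 ej2 ej3] := label_sum_block s' g' j.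
have := cone' four_move_gt0; have := @cone' k.+1 isT.
have := @cone' k.+2 isT; have := @cone' k.+3 isT.
rewrite s'k s'k1 s'k2 s'k3 ?ei0 ?ei1 ?ei2 ?ei3 ?ej0 ?ej1 ?ej2 ?ej3.
rewrite s'k s'k1 s'k2 s'k3 !eqxx ij ji -!(label_sum_move_above _ (leqnn _)).
set Ti := label_sum s g i k.+4 M; set Tj := label_sum s g j k.+4 M.
rewrite !add0r => h3 h2 h1 h0.
have [si0 si1 si2 si3] := label_sum_block s g i.
have [sj0 sj1 sj2 sj3] := label_sum_block s g j.
have [-> | [-> | [-> | ->]]] : u = k \/ u = k.+1 \/ u = k.+2 \/ u = k.+3 by lia.
all: rewrite ?sk2 ?sk3 ?si0 ?si1 ?si2 ?si3 ?sj0 ?sj1 ?sj2 ?sj3 ?sk2 ?sk3 ?eqxx ?ij ?ji ?add0r.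
all: rewrite -/Ti -/Tj ?gk ?gk1 ?gk2 ?gk3.
- by have := move_k_ge0 (C j i) (C i j) (g' k) h3 h1; lia.
- by have := move_k1_ge0 (g' k.+1) p_le0 pq q_le0 h2 h0; lia.
- by have := move_k2_ge0 (C j i) (C i j) (g' k) h3 h1; lia.
- by have := move_k3_ge0 (g' k) (g' k.+1) p_le0 h2; lia.
Qed.

Lemma label_sum_move_head l u : (0 < u <= k)%N ->
  label_sum s g l u k = label_sum s' g' l u k
    + (if (u <= km < k)%N && (s km == l) then pos_part (g' k.+1) - pos_part (- B) else 0)
    + (if (u <= k1m < k)%N && (s k1m == l) then pos_part A - C j i * pos_part B else 0).
Proof.
move=> u_in; have -> : label_sum s' g' l u k = label_sum s g' l u k.
  by apply: eq_label_sum => v v_in; rewrite four_move_eq_out //; lia.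
rewrite -!label_sum_indicator -!label_sumD; apply: eq_label_sum => v v_in.
by rewrite move_map_below //; lia.
Qed.

Lemma label_sum_move_below l u : (0 < u < k)%N -> s u = l ->
  label_sum s g l u M = label_sum s' g' l u M.
Proof.
move=> u_in su; have [km_lt k1m_lt] := uminus_move_lt.
have cat t F : label_sum t F l u M = label_sum t F l u k + label_sum t F l k M.
  by apply: label_sum_cat; lia.
have [sk2 sk3] := four_move_labels; have [s'k s'k1 s'k2 s'k3] := four_move_labels'.
have [e0 e1 e2 e3] := label_sum_block s g l; have [e0' e1' e2' e3'] := label_sum_block s' g' l.
have [gk gk1 gk2 gk3] := move_map_block.
have u_in' : (0 < u < k.+1)%N by lia.
rewrite !cat label_sum_move_head; last lia.
rewrite km_lt k1m_lt !andbT -su (uminus_window s u_in) (uminus_window s u_in') su.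
rewrite e0 e1 e2 e3 e0' e1' e2' e3' label_sum_move_above // sk2 sk3 s'k s'k1 s'k2 s'k3.
rewrite gk gk1 gk2 gk3; case: (eqVneq i l) => [<-|nil].
  have := @move_conserve_i (C j i) (C i j) (g' k) (g' k.+1) (g' k.+3).
  by rewrite [j == i]eq_sym (negbTE four_move_neq); lia.
case: (eqVneq j l) => [<-|njl]; last by rewrite !addr0 !add0r.
have := @move_conserve_j (C j i) (C i j) (g' k) (g' k.+1) four_move_cartan (g' k.+2).
by lia.
Qed.

Lemma move_cone u : (0 < u)%N -> 0 <= label_sum s g (s u) u M.
Proof.
move=> u_gt0; have [u_lt_k | k_le_u] := ltnP u k.
  rewrite label_sum_move_below ?u_gt0 // -four_move_eq_out ?u_lt_k //.
  exact: cone'.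
have [/move_cone_above // | u_lt] := leqP k.+4 u.
by apply: move_cone_block; rewrite k_le_u.
Qed.

End FourMove.

Theorem lemma3p8 (I : finType) (C : I -> I -> int) (k : nat)
  (s s' : nat -> I) (g' : nat -> int) :
  finite_type_cartan C ->
  inf_often s ->
  four_move C k s s' ->
  in_cone s' g' ->
  in_cone s (move_map C k s s' g').
Proof.
move=> [[_ C_diag] C_offdiag _ _ _] _ hmove [[N g'_supp] cone'].
pose M := maxn N k.+4.
have g'_suppM v : (M <= v)%N -> g' v = 0.
  by move=> M_le; apply: g'_supp; apply: leq_trans M_le; apply: leq_maxl.
apply: (@in_cone_label_sum _ _ _ M).
  move=> v M_le; rewrite (move_map_above hmove) ?g'_suppM //.
  by apply: leq_trans M_le; apply: leq_maxr.
apply: (move_cone hmove C_diag C_offdiag (leq_maxr N k.+4)) => u u_gt0.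
exact: cone'.
Qed.
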